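(* Under the standing assumptions below, there exists a unique constant $\eta\in(0,1)$ such that for every $\mathbf v\in\mathbb R_0^{N}$, $$\eta\, \mathrm{d}I_1(\mathbf v)+(1-\eta)\,\mathrm{d}I_2(\mathbf v)=0 .$$
   Context: Let $\mathcal X=\{1,\dots,N\}$ and $\mathcal Y$ be finite alphabets and $W_1,W_2$ transition probability matrices from $\mathcal X$ to $\mathcal Y$. For a distribution $P$ on $\mathcal X$ let $PW_k(y)=\sum_x P(x)W_k(y|x)$, $I_k(P)=\sum_x P(x)D(W_k(\cdot|x)\|PW_k)$ (mutual information, natural logarithms), $\imath_{P,W_k}(x;y)=\log\frac{W_k(y|x)}{PW_k(y)}$, and $V_k(P)=\sum_x P(x)\,\mathrm{Var}[\imath_{P,W_k}(x;Y_k)]$ where $Y_k\sim W_k(\cdot|x)$. Let $C=\max_P\min_{k\in\{1,2\}}I_k(P)$ and $C_k=\max_P I_k(P)$. Standing assumptions: the maximizer $P^*$ of $P\mapsto\min_k I_k(P)$ is unique; $P^*(x)>0$ for all $x$; $V_k(P^* )>0$ for $k=1,2$; $C_k>C$ for $k=1,2$. Let $P^*_{Y_k}=P^*W_k$, let $\mathbb R_0^N$ be the set of vectors in $\mathbb R^N$ whose entries sum to zero, and for $\mathbf v\in\mathbb R_0^N$ define $\mathrm{d}I_k(\mathbf v)=\sum_{x\in\mathcal X}v_x D(W_k(\cdot|x)\|P^*_{Y_k})$ (the directional derivative of $I_k$ at $P^*$ along $\mathbf v$). *)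

From Stdlib Require Import Reals List.
Open Scope R_scope.

(* Alphabets: X = {0,...,N-1} (the paper's {1,...,N} shifted by one),
   Y = {0,...,M-1}.  Channels W : nat -> nat -> R, W x y = W(y|x).
   Distributions / vectors are functions nat -> R, only entries < N matter. *)

Definition sumR (n : nat) (f : nat -> R) : R :=
  fold_right Rplus 0 (map f (seq 0 n)).

Definition is_channel (N M : nat) (W : nat -> nat -> R) : Prop :=
  (forall x y, (x < N)%nat -> (y < M)%nat -> 0 <= W x y) /\
  (forall x, (x < N)%nat -> sumR M (fun y => W x y) = 1).

Definition is_dist (N : nat) (P : nat -> R) : Prop :=
  (forall x, (x < N)%nat -> 0 <= P x) /\ sumR N P = 1.

Definition outd (N : nat) (W : nat -> nat -> R) (P : nat -> R) (y : nat) : R :=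
  sumR N (fun x => P x * W x y).

Definition idens (N : nat) (W : nat -> nat -> R) (P : nat -> R) (x y : nat) : R :=
  ln (W x y / outd N W P y).

Definition KLrow (M : nat) (W : nat -> nat -> R) (x : nat) (Q : nat -> R) : R :=
  sumR M (fun y => if Req_EM_T (W x y) 0 then 0 else W x y * ln (W x y / Q y)).

Definition MI (N M : nat) (W : nat -> nat -> R) (P : nat -> R) : R :=
  sumR N (fun x => if Req_EM_T (P x) 0 then 0 else P x * KLrow M W x (outd N W P)).

Definition condvar (N M : nat) (W : nat -> nat -> R) (P : nat -> R) (x : nat) : R :=
  let m := sumR M (fun y => if Req_EM_T (W x y) 0 then 0 else W x y * idens N W P x y) in
  sumR M (fun y => if Req_EM_T (W x y) 0 then 0
                   else W x y * (idens N W P x y - m) ^ 2).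

Definition dispersion (N M : nat) (W : nat -> nat -> R) (P : nat -> R) : R :=
  sumR N (fun x => P x * condvar N M W P x).

Definition dI (N M : nat) (W : nat -> nat -> R) (Pstar : nat -> R) (v : nat -> R) : R :=
  sumR N (fun x => v x * KLrow M W x (outd N W Pstar)).

From Stdlib Require Import Reals List Lra Lia.
Open Scope R_scope.

(* With Q = P* W, the identity I(P) = sum_x P(x) D(W(.|x) || Q) - D(PW || Q) and the
   bounds 0 <= D <= chi^2 give, for every channel, the concavity bound I(P) <= dI(P) and,
   for zero-sum v, the expansion I(P* + t v) >= I(P* ) + t dI(v) - O(t^2).  Hence optimality
   of P* rules out a zero-sum direction along which both min-terms increase to first order.
   Since C_k > C, the concavity bound gives for each k a direction with dI_k > 0, which
   first forces I_1(P* ) = I_2(P* ) = C; then dI_1 and dI_2 are linear functionals on R_0^N,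
   each positive somewhere but never both positive at once, so they are negatively
   proportional, and the constant of proportionality determines the unique eta. *)

Lemma fold_right_Rplus_acc (l : list R) (a : R) :
  fold_right Rplus a l = fold_right Rplus 0 l + a.
Proof. induction l as [|h l IH]; simpl; [lra | rewrite IH; lra]. Qed.

Lemma sumR_S n f : sumR (S n) f = sumR n f + f n.
Proof.
  unfold sumR. rewrite seq_S, map_app, fold_right_app. simpl.
  rewrite fold_right_Rplus_acc. lra.
Qed.

Lemma sumR_ext n f g : (forall i, (i < n)%nat -> f i = g i) -> sumR n f = sumR n g.
Proof.
  induction n as [|n IH]; intros H; [reflexivity|].
  rewrite !sumR_S, IH, H; auto; lia.
Qed.

Lemma sumR_le n f g : (forall i, (i < n)%nat -> f i <= g i) -> sumR n f <= sumR n g.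
Proof.
  induction n as [|n IH]; intros H; [unfold sumR; simpl; lra|].
  rewrite !sumR_S. apply Rplus_le_compat; [apply IH; auto | apply H]; lia.
Qed.

Lemma sumR_plus n f g : sumR n (fun i => f i + g i) = sumR n f + sumR n g.
Proof. induction n as [|n IH]; [unfold sumR; simpl; lra|]. rewrite !sumR_S, IH. lra. Qed.

Lemma sumR_minus n f g : sumR n (fun i => f i - g i) = sumR n f - sumR n g.
Proof. induction n as [|n IH]; [unfold sumR; simpl; lra|]. rewrite !sumR_S, IH. lra. Qed.

Lemma sumR_scal n c f : sumR n (fun i => c * f i) = c * sumR n f.
Proof. induction n as [|n IH]; [unfold sumR; simpl; lra|]. rewrite !sumR_S, IH. lra. Qed.

Lemma sumR_const0 n : sumR n (fun _ => 0) = 0.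
Proof. induction n as [|n IH]; [reflexivity|]. rewrite sumR_S, IH. lra. Qed.

Lemma sumR_swap n m (F : nat -> nat -> R) :
  sumR n (fun i => sumR m (fun j => F i j)) = sumR m (fun j => sumR n (fun i => F i j)).
Proof.
  induction n as [|n IH].
  - symmetry. apply sumR_const0.
  - rewrite sumR_S, IH, <- sumR_plus. apply sumR_ext. intros. now rewrite sumR_S.
Qed.

Lemma sumR_nonneg n f : (forall i, (i < n)%nat -> 0 <= f i) -> 0 <= sumR n f.
Proof. intros H. rewrite <- (sumR_const0 n). now apply sumR_le. Qed.

Lemma sumR_ge_term n f k :
  (forall i, (i < n)%nat -> 0 <= f i) -> (k < n)%nat -> f k <= sumR n f.
Proof.
  induction n as [|n IH]; intros H Hk; [lia|]. rewrite sumR_S.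
  destruct (Nat.eq_dec k n) as [->|Hne].
  - assert (0 <= sumR n f) by (apply sumR_nonneg; intros; apply H; lia). lra.
  - assert (f k <= sumR n f) by (apply IH; [intros; apply H|]; lia).
    assert (0 <= f n) by (apply H; lia). lra.
Qed.

Lemma ln_le_sub1 z : 0 < z -> ln z <= z - 1.
Proof. intros Hz. pose proof (exp_ineq1_le (ln z)) as H. rewrite exp_ln in H; lra. Qed.

Lemma ln_div_inv a b : 0 < a -> 0 < b -> ln (a / b) = - ln (b / a).
Proof.
  intros Ha Hb. replace (a / b) with (/ (b / a)) by (field; lra).
  apply ln_Rinv, Rdiv_lt_0_compat; lra.
Qed.

Definition relent (M : nat) (p q : nat -> R) : R :=
  sumR M (fun y => p y * ln (p y / q y)).

Definition chi2 (M : nat) (p q : nat -> R) : R :=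
  sumR M (fun y => (p y - q y) ^ 2 / q y).

Section RelativeEntropy.
Variables (M : nat) (p q : nat -> R).
Hypothesis p_nonneg : forall y, (y < M)%nat -> 0 <= p y.
Hypothesis q_nonneg : forall y, (y < M)%nat -> 0 <= q y.
Hypothesis p_abscont : forall y, (y < M)%nat -> q y = 0 -> p y = 0.
Hypothesis sum_pq : sumR M p = sumR M q.

Lemma relent_nonneg : 0 <= relent M p q.
Proof.
  apply Rle_trans with (sumR M (fun y => p y - q y)).
  - rewrite sumR_minus, sum_pq. lra.
  - apply sumR_le. intros y Hy.
    destruct (p_nonneg y Hy) as [Hp|Hp]; [|rewrite <- Hp; pose proof (q_nonneg y Hy); lra].
    destruct (q_nonneg y Hy) as [Hq|Hq]; [|rewrite (p_abscont y Hy (eq_sym Hq)) in Hp; lra].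
    rewrite ln_div_inv by lra.
    pose proof (ln_le_sub1 (q y / p y) ltac:(apply Rdiv_lt_0_compat; lra)) as Hl.
    apply Rmult_le_compat_l with (r := p y) in Hl; [|lra].
    replace (p y * (q y / p y - 1)) with (q y - p y) in Hl by (field; lra). lra.
Qed.

Lemma relent_le_chi2 : relent M p q <= chi2 M p q.
Proof.
  apply Rle_trans with (sumR M (fun y => (p y - q y) ^ 2 / q y + (p y - q y))).
  - apply sumR_le. intros y Hy.
    destruct (p_nonneg y Hy) as [Hp|Hp].
    + destruct (q_nonneg y Hy) as [Hq|Hq]; [|rewrite (p_abscont y Hy (eq_sym Hq)) in Hp; lra].
      pose proof (ln_le_sub1 (p y / q y) ltac:(apply Rdiv_lt_0_compat; lra)) as Hl.
      apply Rmult_le_compat_l with (r := p y) in Hl; [|lra].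
      replace ((p y - q y) ^ 2 / q y + (p y - q y)) with (p y * (p y / q y - 1))
        by (field; lra). exact Hl.
    + rewrite <- Hp. destruct (q_nonneg y Hy) as [Hq|Hq].
      * replace ((0 - q y) ^ 2 / q y + (0 - q y)) with 0 by (field; lra). lra.
      * rewrite <- Hq. unfold Rdiv. rewrite Rinv_0. lra.
  - unfold chi2. rewrite sumR_plus, sumR_minus, sum_pq. lra.
Qed.

End RelativeEntropy.

Section Channel.
Variables (N M : nat) (W : nat -> nat -> R).
Hypothesis W_channel : is_channel N M W.

Lemma outd_nonneg P y : (forall x, (x < N)%nat -> 0 <= P x) ->
  (y < M)%nat -> 0 <= outd N W P y.
Proof.
  intros HP Hy. apply sumR_nonneg. intros x Hx.
  apply Rmult_le_pos; [apply HP | apply W_channel]; auto.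
Qed.

Lemma outd_pos P x y : (forall x, (x < N)%nat -> 0 <= P x) ->
  (x < N)%nat -> (y < M)%nat -> 0 < P x -> 0 < W x y -> 0 < outd N W P y.
Proof.
  intros HP Hx Hy Hpx Hw.
  apply Rlt_le_trans with (P x * W x y); [now apply Rmult_lt_0_compat|].
  apply (sumR_ge_term N (fun x => P x * W x y)); auto.
  intros i Hi. apply Rmult_le_pos; [apply HP | apply W_channel]; auto.
Qed.

Lemma outd_sum P : is_dist N P -> sumR M (outd N W P) = 1.
Proof.
  intros [_ HP]. unfold outd. rewrite <- sumR_swap, <- HP.
  apply sumR_ext. intros x Hx.
  rewrite sumR_scal. destruct W_channel as [_ ->]; auto. ring.
Qed.

Lemma outd_comb P v t y :
  outd N W (fun x => P x + t * v x) y = outd N W P y + t * outd N W v y.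
Proof.
  unfold outd. rewrite <- sumR_scal, <- sumR_plus. apply sumR_ext. intros; ring.
Qed.

Lemma outd_abscont Ps P y : (forall x, (x < N)%nat -> 0 < Ps x) ->
  (y < M)%nat -> outd N W Ps y = 0 -> outd N W P y = 0.
Proof.
  intros HPs Hy H0. unfold outd. rewrite <- (sumR_const0 N). apply sumR_ext.
  intros x Hx. destruct (proj1 W_channel x y Hx Hy) as [Hw|Hw]; [|rewrite <- Hw; ring].
  pose proof (outd_pos Ps x y (fun x Hx => Rlt_le _ _ (HPs x Hx)) Hx Hy (HPs x Hx) Hw). lra.
Qed.

Lemma dI_comb Ps u w l :
  dI N M W Ps (fun x => u x + l * w x) = dI N M W Ps u + l * dI N M W Ps w.
Proof. unfold dI. rewrite <- sumR_scal, <- sumR_plus. apply sumR_ext. intros; ring. Qed.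

Lemma dI_self Ps : (forall x, (x < N)%nat -> 0 < Ps x) -> dI N M W Ps Ps = MI N M W Ps.
Proof.
  intros HPs. apply sumR_ext. intros x Hx.
  destruct (Req_EM_T (Ps x) 0) as [e|]; [pose proof (HPs x Hx); lra | reflexivity].
Qed.

Lemma KLrow_change_ref x Q R : (x < N)%nat ->
  (forall y, (y < M)%nat -> 0 < W x y -> 0 < Q y /\ 0 < R y) ->
  KLrow M W x R = KLrow M W x Q + sumR M (fun y => W x y * ln (Q y / R y)).
Proof.
  intros Hx HQR. unfold KLrow. rewrite <- sumR_plus. apply sumR_ext. intros y Hy.
  destruct (Req_EM_T (W x y) 0) as [e|ne]; [rewrite e; ring|].
  assert (Hw : 0 < W x y) by (destruct (proj1 W_channel x y Hx Hy); auto; congruence).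
  destruct (HQR y Hy Hw) as [HQ HR].
  replace (W x y / R y) with (W x y / Q y * (Q y / R y)) by (field; lra).
  rewrite ln_mult by (apply Rdiv_lt_0_compat; lra). ring.
Qed.

Lemma MI_decomp Ps P : (forall x, (x < N)%nat -> 0 < Ps x) ->
  (forall x, (x < N)%nat -> 0 <= P x) ->
  MI N M W P = dI N M W Ps P - relent M (outd N W P) (outd N W Ps).
Proof.
  intros HPs HP. set (Q := outd N W Ps). set (R := outd N W P).
  assert (Hrow : forall x, (x < N)%nat ->
    (if Req_EM_T (P x) 0 then 0 else P x * KLrow M W x R) =
    P x * KLrow M W x Q + sumR M (fun y => P x * W x y * ln (Q y / R y))).
  { intros x Hx.
    rewrite (sumR_ext M _ (fun y => P x * (W x y * ln (Q y / R y)))) by (intros; ring).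
    rewrite sumR_scal, <- Rmult_plus_distr_l.
    destruct (Req_EM_T (P x) 0) as [e|ne]; [rewrite e; ring|].
    assert (Hpx : 0 < P x) by (destruct (HP x Hx); auto; congruence).
    rewrite (KLrow_change_ref x Q R Hx); [reflexivity|].
    intros y Hy Hw. split; [apply (outd_pos Ps x) | apply (outd_pos P x)]; auto.
    intros; now apply Rlt_le, HPs. }
  unfold MI. fold R. rewrite (sumR_ext _ _ _ Hrow), sumR_plus, sumR_swap.
  unfold dI, relent. fold Q.
  enough (E : sumR M (fun y => sumR N (fun x => P x * W x y * ln (Q y / R y))) =
              - sumR M (fun y => R y * ln (R y / Q y))) by lra.
  replace (- sumR M (fun y => R y * ln (R y / Q y)))
    with (sumR M (fun y => -1 * (R y * ln (R y / Q y)))) by (rewrite sumR_scal; ring).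
  apply sumR_ext. intros y Hy.
  rewrite (sumR_ext N _ (fun x => ln (Q y / R y) * (P x * W x y))) by (intros; ring).
  rewrite sumR_scal. fold (outd N W P y). fold R.
  destruct (Req_EM_T (R y) 0) as [e|ne]; [rewrite e; ring|].
  assert (HQ : 0 < Q y).
  { destruct (outd_nonneg Ps y (fun x Hx => Rlt_le _ _ (HPs x Hx)) Hy) as [|e]; auto.
    exfalso. apply ne. now apply (outd_abscont Ps). }
  assert (HR : 0 < R y).
  { destruct (outd_nonneg P y HP Hy) as [|e]; auto. exfalso. now apply ne. }
  rewrite ln_div_inv by lra. ring.
Qed.
End Channel.

Definition near0plus (A : R -> Prop) : Prop :=
  exists t0, 0 < t0 /\ forall t, 0 < t <= t0 -> A t.

Lemma near0plus_and (A B : R -> Prop) :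
  near0plus A -> near0plus B -> near0plus (fun t => A t /\ B t).
Proof.
  intros [a [Ha HA]] [b [Hb HB]]. exists (Rmin a b). split; [now apply Rmin_pos|].
  intros t Ht. pose proof (Rmin_l a b). pose proof (Rmin_r a b).
  split; [apply HA | apply HB]; lra.
Qed.

Lemma Rmult_le_of_le_div a b t : 0 < b -> t <= a / b -> t * b <= a.
Proof.
  intros Hb Ht. apply Rmult_le_compat_r with (r := b) in Ht; [|lra].
  replace (a / b * b) with a in Ht by (field; lra). exact Ht.
Qed.

Lemma near0plus_quadratic_gt (I c d K : R) : c <= I -> 0 < d \/ c < I ->
  near0plus (fun t => c < I + t * d - t ^ 2 * K).
Proof.
  intros HcI Hcase. pose proof (Rabs_pos K) as HK0. pose proof (Rle_abs K) as HK.
  destruct Hcase as [Hd | Hc].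
  - exists (d / (Rabs K + 1)). split; [apply Rdiv_lt_0_compat; lra|].
    intros t [Ht Htd]. apply Rmult_le_of_le_div in Htd; [|lra].
    assert (t * (t * K) <= t * (t * Rabs K)) by (apply Rmult_le_compat_l; nra).
    assert (t * (t * (Rabs K + 1)) <= t * d) by (apply Rmult_le_compat_l; lra).
    simpl. nra.
  - pose proof (Rabs_pos d) as Hd0. pose proof (Rle_abs (- d)) as Hd.
    rewrite Rabs_Ropp in Hd.
    set (e := (I - c) / (Rabs d + Rabs K + 1)).
    exists (Rmin 1 e). split; [apply Rmin_pos; [lra | apply Rdiv_lt_0_compat; lra]|].
    intros t [Ht Hte]. pose proof (Rmin_l 1 e). pose proof (Rmin_r 1 e).
    assert (t * (Rabs d + Rabs K + 1) <= I - c) by (apply Rmult_le_of_le_div; [lra | fold e; lra]).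
    assert (t * (t * K) <= t * Rabs K) by (apply Rmult_le_compat_l; nra).
    assert (t * - d <= t * Rabs d) by (apply Rmult_le_compat_l; lra).
    simpl. nra.
Qed.

Lemma near0plus_nonneg_shift N (P v : nat -> R) :
  (forall x, (x < N)%nat -> 0 < P x) ->
  near0plus (fun t => forall x, (x < N)%nat -> 0 <= P x + t * v x).
Proof.
  induction N as [|N IH]; intros HP.
  - exists 1. split; [lra|]. intros; lia.
  - destruct IH as [t0 [Ht0 H]]; [intros; apply HP; lia|].
    pose proof (HP N (Nat.lt_succ_diag_r N)) as HPN.
    pose proof (Rabs_pos (v N)) as Hv0. pose proof (Rle_abs (- v N)) as Hv.
    rewrite Rabs_Ropp in Hv.
    set (e := P N / (Rabs (v N) + 1)).
    exists (Rmin t0 e). split; [apply Rmin_pos; [lra | apply Rdiv_lt_0_compat; lra]|].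
    intros t Ht x Hx. pose proof (Rmin_l t0 e). pose proof (Rmin_r t0 e).
    destruct (Nat.eq_dec x N) as [->|Hne]; [|apply H; [lra | lia]].
    assert (t * (Rabs (v N) + 1) <= P N) by (apply Rmult_le_of_le_div; [lra | fold e; lra]).
    assert (t * - v N <= t * Rabs (v N)) by (apply Rmult_le_compat_l; lra).
    nra.
Qed.

Section Linearization.
Variables (N M : nat) (W : nat -> nat -> R) (Ps : nat -> R).
Hypothesis W_channel : is_channel N M W.
Hypothesis Ps_dist : is_dist N Ps.
Hypothesis Ps_pos : forall x, (x < N)%nat -> 0 < Ps x.

Let Ps_nonneg : forall x, (x < N)%nat -> 0 <= Ps x.
Proof. intros; now apply Rlt_le, Ps_pos. Qed.

Let relent_outd_bounds P : is_dist N P ->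
  0 <= relent M (outd N W P) (outd N W Ps) <= chi2 M (outd N W P) (outd N W Ps).
Proof.
  intros HP.
  assert (Hnn : forall y, (y < M)%nat -> 0 <= outd N W P y)
    by (intros; apply (outd_nonneg N M W W_channel); [apply HP | assumption]).
  assert (Hsum : sumR M (outd N W P) = sumR M (outd N W Ps))
    by now rewrite !(outd_sum N M W W_channel).
  split; [apply relent_nonneg | apply relent_le_chi2]; auto.
  all: intros; try now apply (outd_nonneg N M W W_channel).
  all: now apply (outd_abscont N M W W_channel Ps).
Qed.

Lemma MI_le_dI P : is_dist N P -> MI N M W P <= dI N M W Ps P.
Proof.
  intros HP. rewrite (MI_decomp N M W W_channel Ps) by (auto; apply HP).
  pose proof (relent_outd_bounds P HP). lra.
Qed.

Lemma ascent_of_better_input P : is_dist N P ->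
  exists u, sumR N u = 0 /\ MI N M W P - MI N M W Ps <= dI N M W Ps u.
Proof.
  intros HP. exists (fun x => P x + -1 * Ps x). split.
  - rewrite sumR_plus, sumR_scal, (proj2 HP), (proj2 Ps_dist). ring.
  - rewrite dI_comb, dI_self by auto. pose proof (MI_le_dI P HP). lra.
Qed.

Lemma MI_shift_ge v t : is_dist N (fun x => Ps x + t * v x) ->
  MI N M W Ps + t * dI N M W Ps v
    - t ^ 2 * sumR M (fun y => outd N W v y ^ 2 / outd N W Ps y)
  <= MI N M W (fun x => Ps x + t * v x).
Proof.
  intros Ht. rewrite (MI_decomp N M W W_channel Ps (fun x => Ps x + t * v x)) by (auto; apply Ht).
  rewrite dI_comb, dI_self by auto.
  pose proof (relent_outd_bounds _ Ht) as [_ Hchi].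
  enough (chi2 M (outd N W (fun x => Ps x + t * v x)) (outd N W Ps) =
          t ^ 2 * sumR M (fun y => outd N W v y ^ 2 / outd N W Ps y)) by lra.
  unfold chi2. rewrite <- sumR_scal. apply sumR_ext. intros y Hy.
  rewrite outd_comb. unfold Rdiv. ring.
Qed.

Lemma MI_near0plus_gt v c : sumR N v = 0 -> c <= MI N M W Ps ->
  0 < dI N M W Ps v \/ c < MI N M W Ps ->
  near0plus (fun t => c < MI N M W (fun x => Ps x + t * v x)).
Proof.
  intros Hv HcI Hcase.
  destruct (near0plus_and _ _ (near0plus_nonneg_shift N Ps v Ps_pos)
              (near0plus_quadratic_gt _ c _
                 (sumR M (fun y => outd N W v y ^ 2 / outd N W Ps y)) HcI Hcase))
    as [t0 [Ht0 H]].
  exists t0. split; [exact Ht0|]. intros t Ht. destruct (H t Ht) as [Hnn Hgt].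
  assert (Hd : is_dist N (fun x => Ps x + t * v x)).
  { split; [exact Hnn|]. rewrite sumR_plus, sumR_scal, Hv, (proj2 Ps_dist). ring. }
  pose proof (MI_shift_ge v t Hd). lra.
Qed.

End Linearization.

Section OppositeFunctionals.
Variables (V : Type) (comb : V -> R -> V -> V) (Z : V -> Prop) (f g : V -> R).
Hypothesis Z_comb : forall u l w, Z u -> Z w -> Z (comb u l w).
Hypothesis f_comb : forall u l w, f (comb u l w) = f u + l * f w.
Hypothesis g_comb : forall u l w, g (comb u l w) = g u + l * g w.
Hypothesis no_common_ascent : forall v, Z v -> 0 < f v -> 0 < g v -> False.
Variables (u1 u2 : V).
Hypotheses (Z_u1 : Z u1) (f_u1 : 0 < f u1) (Z_u2 : Z u2) (g_u2 : 0 < g u2).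

Lemma g_neg_on_f_ascent : g u1 < 0.
Proof.
  destruct (Rlt_le_dec (g u1) 0) as [|[Hpos|Hzero]]; [assumption| |]; exfalso.
  - now apply (no_common_ascent u1).
  - set (l := (Rabs (f u2) + 1) / f u1).
    apply (no_common_ascent (comb u2 l u1)); [now apply Z_comb| |].
    + rewrite f_comb. unfold l.
      replace ((Rabs (f u2) + 1) / f u1 * f u1) with (Rabs (f u2) + 1) by (field; lra).
      pose proof (Rle_abs (- f u2)) as H. rewrite Rabs_Ropp in H. lra.
    + rewrite g_comb, <- Hzero. lra.
Qed.

Lemma functionals_proportional v : Z v -> f u1 * g v = g u1 * f v.
Proof.
  pose proof g_neg_on_f_ascent as Hg1.
  assert (Hle : forall v, Z v -> f u1 * g v - g u1 * f v <= 0).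
  { intros w Hw. destruct (Rle_lt_dec (f u1 * g w - g u1 * f w) 0) as [|HD]; [assumption|].
    exfalso. set (D := f u1 * g w - g u1 * f w) in HD.
    set (l := (- f w / f u1 + g w / - g u1) / 2).
    apply (no_common_ascent (comb w l u1)); [now apply Z_comb| |].
    - rewrite f_comb. replace (f w + l * f u1) with (D / (2 * - g u1)) by (unfold D, l; field; lra).
      apply Rdiv_lt_0_compat; lra.
    - rewrite g_comb. replace (g w + l * g u1) with (D / (2 * f u1)) by (unfold D, l; field; lra).
      apply Rdiv_lt_0_compat; lra. }
  intros Hv. pose proof (Hle v Hv). pose proof (Hle (comb v (-2) v) (Z_comb v (-2) v Hv Hv)).
  rewrite f_comb, g_comb in *. lra.
Qed.

Lemma unique_vanishing_combination :
  exists! eta, 0 < eta < 1 /\ forall v, Z v -> eta * f v + (1 - eta) * g v = 0.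
Proof.
  pose proof g_neg_on_f_ascent as Hg1.
  exists (- g u1 / (f u1 - g u1)). split; [split|].
  - split; [apply Rdiv_lt_0_compat; lra|].
    apply Rmult_lt_reg_r with (f u1 - g u1); [lra|]. field_simplify; lra.
  - intros v Hv. pose proof (functionals_proportional v Hv).
    apply Rmult_eq_reg_r with (f u1 - g u1); [|lra]. field_simplify; lra.
  - intros eta [_ Heta]. specialize (Heta u1 Z_u1).
    apply Rmult_eq_reg_r with (f u1 - g u1); [|lra]. field_simplify; lra.
Qed.

End OppositeFunctionals.

Section MaxMin.
Variables (N M : nat) (W1 W2 : nat -> nat -> R) (Ps : nat -> R).
Hypotheses (W1_channel : is_channel N M W1) (W2_channel : is_channel N M W2).
Hypothesis Ps_dist : is_dist N Ps.
Hypothesis Ps_pos : forall x, (x < N)%nat -> 0 < Ps x.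
Hypothesis Ps_maxmin : forall P, is_dist N P ->
  Rmin (MI N M W1 P) (MI N M W2 P) <= Rmin (MI N M W1 Ps) (MI N M W2 Ps).

Let C := Rmin (MI N M W1 Ps) (MI N M W2 Ps).

Lemma maxmin_no_common_ascent v : sumR N v = 0 ->
  0 < dI N M W1 Ps v \/ C < MI N M W1 Ps ->
  0 < dI N M W2 Ps v \/ C < MI N M W2 Ps -> False.
Proof.
  intros Hv H1 H2.
  pose proof (MI_near0plus_gt N M W1 Ps W1_channel Ps_dist Ps_pos v C Hv (Rmin_l _ _) H1) as E1.
  pose proof (MI_near0plus_gt N M W2 Ps W2_channel Ps_dist Ps_pos v C Hv (Rmin_r _ _) H2) as E2.
  destruct (near0plus_and _ _ (near0plus_nonneg_shift N Ps v Ps_pos) (near0plus_and _ _ E1 E2))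
    as [t [Ht Hall]].
  destruct (Hall t (conj Ht (Rle_refl t))) as [Hnn [Hgt1 Hgt2]].
  assert (Hd : is_dist N (fun x => Ps x + t * v x)).
  { split; [exact Hnn|]. rewrite sumR_plus, sumR_scal, Hv, (proj2 Ps_dist). ring. }
  pose proof (Ps_maxmin _ Hd). pose proof (Rmin_glb_lt _ _ _ Hgt1 Hgt2). unfold C in *. lra.
Qed.

Lemma maxmin_MI_eq :
  (exists P, is_dist N P /\ MI N M W1 P > C) ->
  (exists P, is_dist N P /\ MI N M W2 P > C) ->
  MI N M W1 Ps = C /\ MI N M W2 Ps = C.
Proof.
  intros [P1 [HP1 Hgt1]] [P2 [HP2 Hgt2]].
  destruct (ascent_of_better_input N M W1 Ps W1_channel Ps_dist Ps_pos P1 HP1) as [u1 [Hu1 Hd1]].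
  destruct (ascent_of_better_input N M W2 Ps W2_channel Ps_dist Ps_pos P2 HP2) as [u2 [Hu2 Hd2]].
  pose proof (Rmin_l (MI N M W1 Ps) (MI N M W2 Ps)) as H1.
  pose proof (Rmin_r (MI N M W1 Ps) (MI N M W2 Ps)) as H2. fold C in H1, H2.
  assert (Hor : C = MI N M W1 Ps \/ C = MI N M W2 Ps) by (unfold C, Rmin; destruct Rle_dec; auto).
  split; destruct (Rle_lt_or_eq_dec _ _ H1) as [Hlt1|]; destruct (Rle_lt_or_eq_dec _ _ H2) as [Hlt2|];
    try lra; exfalso.
  - apply (maxmin_no_common_ascent u2 Hu2); [right | left]; lra.
  - apply (maxmin_no_common_ascent u1 Hu1); [left | right]; lra.
Qed.

End MaxMin.

Theorem lemma1 (N M : nat) (W1 W2 : nat -> nat -> R) (Pstar : nat -> R)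
  (hW1 : is_channel N M W1) (hW2 : is_channel N M W2)
  (hPd : is_dist N Pstar)
  (hmax : forall P, is_dist N P ->
      Rmin (MI N M W1 P) (MI N M W2 P) <= Rmin (MI N M W1 Pstar) (MI N M W2 Pstar))
  (huniq : forall P, is_dist N P ->
      Rmin (MI N M W1 P) (MI N M W2 P) = Rmin (MI N M W1 Pstar) (MI N M W2 Pstar) ->
      forall x, (x < N)%nat -> P x = Pstar x)
  (hpos : forall x, (x < N)%nat -> 0 < Pstar x)
  (hV1 : 0 < dispersion N M W1 Pstar) (hV2 : 0 < dispersion N M W2 Pstar)
  (hC1 : exists P, is_dist N P /\ MI N M W1 P > Rmin (MI N M W1 Pstar) (MI N M W2 Pstar))
  (hC2 : exists P, is_dist N P /\ MI N M W2 P > Rmin (MI N M W1 Pstar) (MI N M W2 Pstar)) :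
  exists! eta : R, 0 < eta < 1 /\
    forall v : nat -> R, sumR N v = 0 ->
      eta * dI N M W1 Pstar v + (1 - eta) * dI N M W2 Pstar v = 0.
Proof.
  destruct (maxmin_MI_eq N M W1 W2 Pstar hW1 hW2 hPd hpos hmax hC1 hC2) as [E1 E2].
  destruct hC1 as [P1 [HP1 Hgt1]], hC2 as [P2 [HP2 Hgt2]].
  destruct (ascent_of_better_input N M W1 Pstar hW1 hPd hpos P1 HP1) as [u1 [Hu1 Hd1]].
  destruct (ascent_of_better_input N M W2 Pstar hW2 hPd hpos P2 HP2) as [u2 [Hu2 Hd2]].
  apply (unique_vanishing_combination (nat -> R) (fun u l w x => u x + l * w x)
           (fun v => sumR N v = 0) (dI N M W1 Pstar) (dI N M W2 Pstar)) with u1 u2;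
    try (intros; apply dI_comb); try assumption; try lra.
  - intros u l w Hu Hw. now rewrite sumR_plus, sumR_scal, Hu, Hw, Rmult_0_r, Rplus_0_r.
  - intros v Hv Hf Hg. apply (maxmin_no_common_ascent N M W1 W2 Pstar hW1 hW2 hPd hpos hmax v Hv);
      left; assumption.
Qed.
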